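(* Let $k\ge 1$, $n=2^{k+1}$, and run Jakobsson's pebble-update procedure (with its $k+1$ pebbles) for $n/2=2^k$ steps. Then for every initial label $j$ with $1\le j<k$, the pebble with initial label $j$ makes exactly $2^{k-j-1}$ backward moves during these $2^k$ steps.
   Context: Jakobsson's pebble-update procedure (hash-chain preimage traversal). Fix $K\ge 1$ and $N=2^K$ (in the claim, $N=n$ and $K=k+1$). There are $K$ pebbles, identified by their initial label $j\in\{1,\dots,K\}$. Pebble $j$ has two fixed constants $S_j=3\cdot 2^j$ (start increment) and $D_j=2^{j+1}$ (destination increment), and two integer fields $\mathrm{Position}$ and $\mathrm{Destination}$ (which may be set to $+\infty$). Initially $\mathrm{Position}=\mathrm{Destination}=2^j$ for pebble $j$, and a counter $c$ equals $0$. The pebbles are kept sorted by $\mathrm{Position}$, and ''the first pebble'' means the pebble with the smallest $\mathrm{Position}$. One step: (i) if $c=N$, stop; otherwise $c\leftarrow c+1$; (ii) for every pebble with $\mathrm{Position}\ne\mathrm{Destination}$, set $\mathrm{Position}\leftarrow\mathrm{Position}-2$; (iii) if $c$ is even, the first pebble (say with initial label $j$) makes a backward move: $\mathrm{Position}\leftarrow \mathrm{Position}+S_j$, $\mathrm{Destination}\leftarrow\mathrm{Destination}+D_j$; if the new Destination exceeds $N$, both fields are set to $+\infty$ and the pebble is said to be discarded; then the pebbles are re-sorted by $\mathrm{Position}$. (Each pebble also stores a hash-chain value, which does not influence the evolution of the Position and Destination fields.) *)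

From HB Require Import structures.
From mathcomp Require Import all_boot all_order all_algebra.
Set Implicit Arguments. Unset Strict Implicit. Unset Printing Implicit Defensive.
Import Order.TTheory GRing.Theory Num.Theory.
Local Open Scope ring_scope.

(* A pebble: (initial label j, Position, Destination); [None] encodes +infinity. *)
Definition pebble := (nat * option int * option int)%type.
Definition plabel (p : pebble) : nat := p.1.1.
Definition ppos (p : pebble) : option int := p.1.2.
Definition pdst (p : pebble) : option int := p.2.

Definition ole (a b : option int) : bool :=
  match a, b with
  | _, None => true
  | None, Some _ => false
  | Some x, Some y => x <= y
  end.

Definition pebble_le (p q : pebble) : bool := ole (ppos p) (ppos q).

Definition Sinc (j : nat) : int := (3 * 2 ^ j)%N%:Z.
Definition Dinc (j : nat) : int := (2 ^ j.+1)%N%:Z.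

Definition advance (p : pebble) : pebble :=
  if ppos p != pdst p then
    (plabel p, (match ppos p with Some x => Some (x - 2) | None => None end), pdst p)
  else p.

Definition backward (N : nat) (p : pebble) : pebble :=
  let j := plabel p in
  match ppos p, pdst p with
  | Some x, Some y =>
      if (N%:Z < y + Dinc j) then (j, None, None)
      else (j, Some (x + Sinc j), Some (y + Dinc j))
  | _, _ => (j, None, None)
  end.

(* state: counter c, and the list of pebbles kept sorted by Position
   ([sort] is a stable merge sort). *)
Definition pstate := (nat * seq pebble)%type.

Definition step (N : nat) (st : pstate) : pstate * option nat :=
  let: (c, l) := st in
  if c == N then (st, None) else
  let c' := c.+1 in
  let l1 := sort pebble_le (map advance l) in
  if ~~ odd c' then
    match l1 with
    | p :: t => ((c', sort pebble_le (backward N p :: t)), Some (plabel p))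
    | [::] => ((c', l1), None)
    end
  else ((c', l1), None).

Definition init_state (K : nat) : pstate :=
  (0%N, [seq (j, Some (2 ^ j)%N%:Z, Some (2 ^ j)%N%:Z) | j <- iota 1 K]).

Fixpoint run_moves (N : nat) (m : nat) (st : pstate) : seq nat :=
  match m with
  | 0 => [::]
  | m'.+1 =>
      let: (st', mv) := step N st in
      match mv with
      | Some j => j :: run_moves N m' st'
      | None => run_moves N m' st'
      end
  end.

Definition backward_moves (K m j : nat) : nat :=
  count_mem j (run_moves (2 ^ K) m (init_state K)).

From mathcomp Require Import all_boot all_order all_algebra zify.
Set Implicit Arguments. Unset Strict Implicit. Unset Printing Implicit Defensive.
Import Order.TTheory GRing.Theory.

(* Jakobsson's pebble-update procedure: pebble j moves at every step 2^j * odd.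

   Pebble j makes its m-th backward move (m = 0, 1, ...) when the counter reaches
   2^j * (2m + 1), which is then its Destination.  Arithmetic on odd multiples of 2^j shows that
   [dest j c] is the unique odd multiple of 2^j in the window (c, c + 2^(j+1)],
   hence [dest j c = c + 1] exactly when j is the 2-adic valuation of c + 1,
   and that [nmoves j (2^k) = 2^(k-j-1)] for j < k.

   We then prove that, during the first 2^k of the 2^(k+1) steps, the list of
   pebbles is always a permutation of an explicit configuration: pebble j sits
   at an even position between [dest j c] and [dest j c + 2 (dest j c - c)],
   with Destination [dest j c] (or is discarded once [dest j c] exceeds N).
   This invariant implies that at an even step c + 1 the first pebble is the
   one labelled [logn 2 (c + 1)], sitting exactly on its destination, and that
   nobody moves at odd steps. *)

(* The move schedule: [nmoves j c] is the number of backward moves of pebble j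
   during the first c steps, and [dest j c] its Destination after them. *)
Fixpoint nmoves (j c : nat) : nat :=
  if c is c'.+1 then nmoves j c' + (2 ^ j * (2 * nmoves j c' + 1) == c'.+1)
  else 0.

Definition dest (j c : nat) : nat := 2 ^ j * (2 * nmoves j c + 1).

Lemma nmovesS j c : nmoves j c.+1 = nmoves j c + (dest j c == c.+1).
Proof. by []. Qed.

Lemma destS j c :
  dest j c.+1 = if dest j c == c.+1 then dest j c + 2 ^ j.+1 else dest j c.
Proof.
rewrite /dest nmovesS; case: eqP => _; last by rewrite addn0.
by rewrite expnS; lia.
Qed.

Lemma dest_stable j c : dest j c != c.+1 -> dest j c.+1 = dest j c.
Proof. by rewrite destS => /negbTE ->. Qed.

Lemma dest_window j c : c < dest j c <= c + 2 ^ j.+1.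
Proof.
elim: c => [|c /andP [gt le]].
  by rewrite /dest muln0 !add0n muln1 expn_gt0 leq_exp2l //= ltnW.
rewrite destS; case: eqP => [->|ne]; first by rewrite leqnn andbT; lia.
by apply/andP; split; lia.
Qed.

(* For j > 0 destinations are even, so positions and destinations keep the
   same parity. *)
Lemma dest_double j c : 0 < j -> dest j c = 2 * (2 ^ j.-1 * (2 * nmoves j c + 1)).
Proof. by case: j => // j _; rewrite /dest expnS mulnA. Qed.

Lemma odd_multiple_le j c x y :
  c < 2 ^ j * (2 * x + 1) -> 2 ^ j * (2 * y + 1) <= c + 2 ^ j.+1 -> y <= x.
Proof.
move=> lo hi; have P0 : 0 < 2 ^ j by rewrite expn_gt0.
have : 2 ^ j * (2 * y + 1) < 2 ^ j * (2 * x + 3).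
  have -> : 2 * x + 3 = 2 * x + 1 + 2 by lia.
  by rewrite mulnDr; rewrite expnS in hi; lia.
by rewrite ltn_pmul2l //; lia.
Qed.

Lemma odd_multiple_unique j c x y :
  c < 2 ^ j * (2 * x + 1) <= c + 2 ^ j.+1 ->
  c < 2 ^ j * (2 * y + 1) <= c + 2 ^ j.+1 -> x = y.
Proof.
move=> /andP [lox hix] /andP [loy hiy]; apply/eqP.
by rewrite eqn_leq (odd_multiple_le loy hix) (odd_multiple_le lox hiy).
Qed.

Lemma logn2_pow_odd a x : logn 2 (2 ^ a * (2 * x + 1)) = a.
Proof.
rewrite lognM ?expn_gt0 ?addn1 // pfactorK // logn_coprime ?addn0 //.
by rewrite coprime2n /= oddM.
Qed.

Lemma dest_succE j c : (dest j c == c.+1) = (logn 2 c.+1 == j).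
Proof.
apply/eqP/eqP => [<-|lgj]; first exact: logn2_pow_odd.
have [m m_odd em] := pfactor_coprime (isT : prime 2) (ltn0Sn c).
rewrite coprime2n in m_odd.
have ex : c.+1 = 2 ^ j * (2 * m./2 + 1).
  rewrite em lgj mulnC; congr (_ * _).
  by rewrite -[in LHS](odd_double_half m) m_odd -muln2; lia.
rewrite ex /dest; congr (_ * (2 * _ + 1)).
apply: (odd_multiple_unique (j := j) (c := c)).
  exact: dest_window.
by rewrite -ex; have := expn_gt0 2 j.+1; lia.
Qed.

Lemma logn2_gt0 n : 0 < n -> ~~ odd n -> 0 < logn 2 n.
Proof. by move=> n0 ev; rewrite logn_gt0 mem_primes n0 dvdn2 ev. Qed.

Lemma logn2_le n k : 0 < n <= 2 ^ k -> logn 2 n <= k.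
Proof.
move=> /andP [n0 nk]; rewrite -(leq_exp2l _ _ (isT : 1 < 2)).
exact: leq_trans (dvdn_leq n0 (pfactor_dvdnn 2 n)) nk.
Qed.

Lemma logn2_odd n : odd n -> logn 2 n = 0.
Proof. by move=> n_odd; rewrite logn_coprime // coprime2n. Qed.

Lemma dest_odd_step j c : odd c.+1 -> 0 < j -> dest j c.+1 = dest j c.
Proof.
move=> c_odd j0; apply: dest_stable.
by rewrite dest_succE logn2_odd // eq_sym -lt0n j0.
Qed.

Lemma nmoves_pow2 k j : j < k -> nmoves j (2 ^ k) = 2 ^ (k - j - 1).
Proof.
move=> jk; have ek : 2 ^ k = 2 ^ j * (2 * 2 ^ (k - j - 1)).
  by rewrite -expnS -expnD; congr expn; lia.
apply: (odd_multiple_unique (j := j) (c := 2 ^ k)); first exact: dest_window.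
rewrite {1 2}ek mulnDr muln1 expnS; have := expn_gt0 2 j; lia.
Qed.

Lemma ole_total : total ole.
Proof. by case=> [x|] [y|] //=; apply: le_total. Qed.

Lemma ole_trans : transitive ole.
Proof. by move=> [y|] [x|] [z|] //=; apply: le_trans. Qed.

Lemma pebble_le_total : total pebble_le.
Proof. by move=> p q; apply: ole_total. Qed.

Lemma pebble_le_trans : transitive pebble_le.
Proof. by move=> p q r; apply: ole_trans. Qed.

Lemma sorted_head_le (T : eqType) (r : rel T) p t x :
  total r -> transitive r -> sorted r (p :: t) -> x \in p :: t -> r p x.
Proof.
move=> r_tot r_tr srt; rewrite inE => /predU1P [->|xt].
  by rewrite -[r p p]orbb.
exact: (allP (order_path_min r_tr srt)).
Qed.

Lemma perm_map_update (I T : eqType) (f g : I -> T) (s : seq I) a t :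
  uniq s -> a \in s -> perm_eq (f a :: t) (map f s) ->
  (forall i, i \in s -> i != a -> g i = f i) -> perm_eq (g a :: t) (map g s).
Proof.
move=> s_uniq a_s fs_perm gf.
have t_perm : perm_eq t (map f (rem a s)).
  by rewrite -(perm_cons (f a)) (permPl fs_perm) (perm_map f (perm_to_rem a_s)).
rewrite (permPr (perm_map g (perm_to_rem a_s))) /= perm_cons.
suff -> : map g (rem a s) = map f (rem a s) by [].
apply/eq_in_map => i; rewrite mem_rem_uniq // inE => /andP [ne i_s].
exact: gf.
Qed.

Lemma run_moves_step N r st st' mv : step N st = (st', mv) ->
  run_moves N r.+1 st =
    if mv is Some j then j :: run_moves N r st' else run_moves N r st'.
Proof. by move=> /= ->. Qed.

Section Simulation.
Variable k : nat.
Local Notation N := (2 ^ k.+1).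

Definition pebble_at (c : nat) (half : nat -> nat) (j : nat) : pebble :=
  if N < dest j c then (j, None, None)
  else (j, Some (Posz (2 * half j)), Some (Posz (dest j c))).

Definition config (c : nat) (half : nat -> nat) : seq pebble :=
  [seq pebble_at c half j | j <- iota 1 k.+1].

(* The positional invariant: a live pebble lies at or behind its destination,
   but close enough to reach it in time. *)
Definition well_placed (c : nat) (half : nat -> nat) : Prop :=
  forall j, 0 < j <= k.+1 -> dest j c <= N ->
    dest j c <= 2 * half j <= dest j c + 2 * (dest j c - c).

Definition reachable (c : nat) (l : seq pebble) : Prop :=
  exists2 half, perm_eq l (config c half) & well_placed c half.

Definition settle (c : nat) (half : nat -> nat) (j : nat) : nat :=
  if 2 * half j == dest j c then half j else (half j).-1.

Definition kick (half : nat -> nat) (j0 j : nat) : nat :=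
  if j == j0 then half j0 + 3 * 2 ^ j0.-1 else half j.

Lemma reachable_perm c l l' : perm_eq l l' -> reachable c l' -> reachable c l.
Proof. by move=> ll' [half l'_perm placed]; exists half; rewrite ?(permPl ll'). Qed.

Lemma reachable0 :
  reachable 0 [seq (j, Some (Posz (2 ^ j)), Some (Posz (2 ^ j))) | j <- iota 1 k.+1].
Proof.
have pow_half j : 0 < j -> 2 * 2 ^ j.-1 = 2 ^ j by case: j => // j _; rewrite expnS.
exists (fun j => 2 ^ j.-1).
  suff -> : config 0 (fun j => 2 ^ j.-1) =
    [seq (j, Some (Posz (2 ^ j)), Some (Posz (2 ^ j))) | j <- iota 1 k.+1] by [].
  apply/eq_in_map => j; rewrite mem_iota add1n => /andP [j0 jk].
  rewrite /pebble_at /dest muln0 add0n muln1 pow_half //.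
  by rewrite ltnNge leq_exp2l // -ltnS jk.
move=> j /andP [j0 _] _; rewrite /dest muln0 add0n muln1 subn0 pow_half //; lia.
Qed.

(* After step (ii) the invariant holds for time c + 1, with the old destinations;
   here the parity of positions and destinations is essential. *)
Lemma settle_placed c half j : well_placed c half -> 0 < j <= k.+1 -> dest j c <= N ->
  dest j c <= 2 * settle c half j <= dest j c + 2 * (dest j c - c.+1).
Proof.
move=> placed j_range dN; have /andP [lo hi] := placed j j_range dN.
have /andP [j0 _] := j_range; have := dest_double c j0; have := dest_window j c.
by rewrite /settle; case: eqP; lia.
Qed.

Lemma advance_pebble_at c half j : well_placed c half -> 0 < j <= k.+1 ->
  advance (pebble_at c half j) = pebble_at c (settle c half) j.
Proof.
move=> placed j_range; rewrite /pebble_at; case: ltnP => // dN.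
have /andP [lo hi] := placed j j_range dN.
rewrite /advance /settle /ppos /pdst /=.
case: (2 * half j =P dest j c) => [-> //|ne]; first by rewrite eqxx.
have -> : (Some (Posz (2 * half j)) != Some (Posz (dest j c))) by apply/eqP => -[].
have /andP [j0 _] := j_range; have d_even := dest_double c j0.
have -> : 2 * half j = 2 * (half j).-1 + 2 by lia.
by rewrite PoszD addrK.
Qed.

Lemma perm_advance c l half : perm_eq l (config c half) -> well_placed c half ->
  perm_eq (map advance l) (config c (settle c half)).
Proof.
move=> l_perm placed; rewrite (permPl (perm_map advance l_perm)) -map_comp.
suff -> : map (advance \o pebble_at c half) (iota 1 k.+1) = config c (settle c half).
  by [].
apply/eq_in_map => j; rewrite mem_iota add1n => j_range.
exact: advance_pebble_at.
Qed.

Lemma odd_step c half : odd c.+1 -> well_placed c half ->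
  config c.+1 (settle c half) = config c (settle c half) /\
  well_placed c.+1 (settle c half).
Proof.
move=> c_odd placed; split.
  apply/eq_in_map => j; rewrite mem_iota => /andP [j0 _].
  by rewrite /pebble_at dest_odd_step.
move=> j j_range; have /andP [j0 _] := j_range.
rewrite !dest_odd_step //; exact: settle_placed.
Qed.

Lemma front_is_mover c half j : well_placed c half -> 0 < j <= k.+1 ->
  ole (ppos (pebble_at c (settle c half) j)) (Some (Posz c.+1)) -> logn 2 c.+1 = j.
Proof.
move=> placed j_range; rewrite /pebble_at; case: ltnP => //= dN.
rewrite lez_nat => le_c; have bounds := settle_placed placed j_range dN.
have win := dest_window j c.
by apply/eqP; rewrite -dest_succE; apply/eqP; lia.
Qed.

Lemma mover_at c half : well_placed c half -> c.+1 <= N ->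
  0 < logn 2 c.+1 <= k.+1 ->
  pebble_at c (settle c half) (logn 2 c.+1) =
    (logn 2 c.+1, Some (Posz c.+1), Some (Posz c.+1)).
Proof.
move=> placed cN j_range.
have /eqP d_succ : dest (logn 2 c.+1) c == c.+1 by rewrite dest_succE.
have := settle_placed placed j_range; rewrite d_succ subnn => /(_ cN) bounds.
by rewrite /pebble_at d_succ ltnNge cN; congr (_, Some (Posz _), _); lia.
Qed.

Lemma backward_mover c half j0 : dest j0 c = c.+1 -> 0 < j0 -> 2 * half j0 = c.+1 ->
  backward N (j0, Some (Posz c.+1), Some (Posz c.+1)) =
    pebble_at c.+1 (kick half j0) j0.
Proof.
move=> d_succ j0_gt0 h_succ.
have pow_pred : 2 ^ j0 = 2 * 2 ^ j0.-1 by case: (j0) j0_gt0 => // j _; rewrite expnS.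
rewrite /backward /pebble_at /kick /Sinc /Dinc /= destS d_succ eqxx -!PoszD ltz_nat.
case: ltnP => // _; congr (_, Some (Posz _), _); rewrite eqxx pow_pred; lia.
Qed.

Lemma kick_placed c half j0 : well_placed c half -> 0 < j0 -> dest j0 c = c.+1 ->
  2 * settle c half j0 = c.+1 -> well_placed c.+1 (kick (settle c half) j0).
Proof.
move=> placed j0_gt0 d_succ h_succ j j_range; rewrite /kick.
case: (j =P j0) => [->|ne].
  have pow_pred : 2 ^ j0.+1 = 4 * 2 ^ j0.-1.
    by case: (j0) j0_gt0 => // i _; rewrite !expnS mulnA.
  rewrite destS d_succ eqxx pow_pred; lia.
have d_stable : dest j c.+1 = dest j c.
  apply: dest_stable; rewrite dest_succE; apply/eqP => lj; apply: ne.
  by rewrite -lj; apply/eqP; rewrite -dest_succE d_succ.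
by rewrite d_stable; exact: settle_placed.
Qed.

Lemma even_step c half p t : c < 2 ^ k -> ~~ odd c.+1 -> well_placed c half ->
  perm_eq (p :: t) (config c (settle c half)) -> sorted pebble_le (p :: t) ->
  plabel p = logn 2 c.+1 /\ reachable c.+1 (backward N p :: t).
Proof.
move=> ck c_even placed pt_perm pt_sorted; set j0 := logn 2 c.+1.
have cN : c.+1 <= N by rewrite expnS; lia.
have j0_range : 0 < j0 <= k.+1.
  by rewrite logn2_gt0 //= logn2_le //; rewrite expnS in cN *; lia.
have j0_gt0 : 0 < j0 by case/andP: j0_range.
have j0_iota : j0 \in iota 1 k.+1 by rewrite mem_iota add1n ltnS.
have mover := mover_at placed cN j0_range.
have p_mover : p = pebble_at c (settle c half) j0.
  have j0_front : pebble_le p (pebble_at c (settle c half) j0).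
    apply: (sorted_head_le pebble_le_total pebble_le_trans pt_sorted).
    by rewrite (perm_mem pt_perm) map_f.
  have /mapP [j j_iota p_j] : p \in config c (settle c half).
    by rewrite -(perm_mem pt_perm) mem_head.
  rewrite p_j in j0_front *; congr pebble_at; apply/esym/(front_is_mover placed).
    by move: j_iota; rewrite mem_iota add1n ltnS.
  by move: j0_front; rewrite /pebble_le mover.
have /eqP d_succ : dest j0 c == c.+1 by rewrite dest_succE.
have h_succ : 2 * settle c half j0 = c.+1.
  by move: mover; rewrite /pebble_at d_succ ltnNge cN => -[].
split; first by rewrite p_mover mover.
exists (kick (settle c half) j0); last exact: kick_placed j0_gt0 d_succ h_succ.
rewrite p_mover mover (backward_mover (half := settle c half) d_succ j0_gt0 h_succ).
have mover_perm :
  perm_eq (pebble_at c (settle c half) j0 :: t) (config c (settle c half)).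
  by rewrite -p_mover.
apply: (perm_map_update (iota_uniq _ _) j0_iota mover_perm).
move=> j _ ne; rewrite /pebble_at /kick (negbTE ne) dest_stable //.
by rewrite dest_succE eq_sym.
Qed.

Lemma step_reachable c l : c < 2 ^ k -> reachable c l -> exists l',
  step N (c, l) = ((c.+1, l'), if odd c.+1 then None else Some (logn 2 c.+1)) /\
  reachable c.+1 l'.
Proof.
move=> ck [half l_perm placed].
have cN : (c == N) = false by rewrite expnS; apply/negbTE; lia.
have adv_perm := perm_advance l_perm placed.
rewrite /step cN; case: ifP => [c_even|/negbFE c_odd].
  case E: (sort pebble_le (map advance l)) => [|p t].
    move: (size_sort pebble_le (map advance l)).
    by rewrite E (perm_size adv_perm) size_map size_iota.
  have pt_perm : perm_eq (p :: t) (config c (settle c half)) by rewrite -E perm_sort.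
  have pt_sorted : sorted pebble_le (p :: t).
    by rewrite -E; exact: sort_sorted pebble_le_total _.
  have [-> reach] := even_step ck c_even placed pt_perm pt_sorted.
  exists (sort pebble_le (backward N p :: t)); rewrite (negbTE c_even); split => //.
  by apply: reachable_perm reach; rewrite perm_sort.
exists (sort pebble_le (map advance l)); rewrite c_odd; split => //.
have [conf_eq placed'] := odd_step c_odd placed.
by exists (settle c half); rewrite ?perm_sort ?conf_eq.
Qed.

Lemma run_moves_count r c l j : c + r <= 2 ^ k -> reachable c l -> 0 < j ->
  count_mem j (run_moves N r (c, l)) + nmoves j c = nmoves j (c + r).
Proof.
elim: r c l => [|r IH] c l cr reach j_gt0; first by rewrite addn0.
have ck : c < 2 ^ k by lia.
have [l' [step_eq reach']] := step_reachable ck reach.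
rewrite (run_moves_step _ step_eq) -addSnnS -(IH c.+1 l') ?addSnnS //.
rewrite nmovesS dest_succE.
case: ifP => [c_odd|_] /=; last lia.
by rewrite logn2_odd //; case: j j_gt0 {IH} => // j _; rewrite addn0.
Qed.

End Simulation.

Theorem fact7 (k j : nat) :
  (1 <= k)%N -> (1 <= j)%N -> (j < k)%N ->
  backward_moves k.+1 (2 ^ k) j = (2 ^ (k - j - 1))%N.
Proof.
move=> _ j_gt0 jk.
have := run_moves_count (r := 2 ^ k) (c := 0) (leqnn _) (reachable0 k) j_gt0.
by rewrite add0n addn0 nmoves_pow2.
Qed.
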